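(* Let $a\ge 2$ be an integer, $B=(1,a,a+1)$ and let $M>0$ be an integer. If $(a+1)\nmid M$ and $M\ge a\left(\lfloor \frac{M}{a+1}\rfloor+1\right)$, then $O_B(M)=1+\lfloor \frac{M}{a+1}\rfloor$. Otherwise, $O_B(M)=M-a\lfloor \frac{M}{a+1}\rfloor$.
   Context: $\mathbb{N}=\{0,1,2,\dots\}$. For $B=(b_1,\dots,b_k)$ of positive integers and an integer $M$, $O_B(M)=\min\{\sum_{i=1}^k x_i : \sum_{i=1}^k b_ix_i=M,\ x_i\in\mathbb{N}\}$. *)

From mathcomp Require Import all_boot.
Set Implicit Arguments. Unset Strict Implicit. Unset Printing Implicit Defensive.

Definition is_repr (B : seq nat) (M : nat) (x : seq nat) : Prop :=
  size x = size B /\ \sum_(i < size B) nth 0 B i * nth 0 x i = M.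

Definition OB_eq (B : seq nat) (M k : nat) : Prop :=
  (exists x, is_repr B M x /\ \sum_(i < size B) nth 0 x i = k) /\
  (forall x, is_repr B M x -> k <= \sum_(i < size B) nth 0 x i).

(* Write M = q (a + 1) + r with r <= a.  Every coin is worth at most a + 1, so
   at least ceil (M / (a + 1)) coins are needed; when r > 0 and r + q >= a this
   bound q + 1 is reached by trading a - r coins of value a + 1 for a + 1 - r
   coins of value a.  Otherwise the greedy choice of q coins a + 1 and r coins 1
   is optimal: if r > 0 then M < a (q + 1) allows at most q coins of
   value >= a, and each coin contributes at most a more to M than to the
   coin count, so at least M - a q coins are used. *)

From mathcomp Require Import all_boot zify.

Section CoinsOneAASucc.

Variables a M : nat.

Let B := [:: 1; a; a + 1].

Lemma is_repr_1_a_aS x :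
  is_repr B M x ->
  exists x0 x1 x2, x = [:: x0; x1; x2] /\ x0 + a * x1 + (a + 1) * x2 = M.
Proof.
case=> size_x; case: x size_x => [|x0 [|x1 [|x2 [|]]]] // _.
rewrite !big_ord_recr big_ord0 /= => <-.
by exists x0, x1, x2; split => //; lia.
Qed.

Lemma OB_eq_1_a_aS k :
  (exists x0 x1 x2, x0 + a * x1 + (a + 1) * x2 = M /\ x0 + x1 + x2 = k) ->
  (forall x0 x1 x2, x0 + a * x1 + (a + 1) * x2 = M -> k <= x0 + x1 + x2) ->
  OB_eq B M k.
Proof.
have sum3 x0 x1 x2 : \sum_(i < size B) nth 0 [:: x0; x1; x2] i = x0 + x1 + x2.
  by rewrite !big_ord_recr big_ord0 /= add0n.
move=> [x0 [x1 [x2 [reprx <-]]]] kmin; split.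
- exists [:: x0; x1; x2]; rewrite sum3; split => //; split => //.
  by rewrite !big_ord_recr big_ord0 /=; lia.
- by move=> _ /is_repr_1_a_aS [y0 [y1 [y2 [-> /kmin]]]]; rewrite sum3.
Qed.

Lemma coins_1_a_aS_ge_div {x0 x1 x2 : nat} :
  x0 + a * x1 + (a + 1) * x2 = M -> M <= (a + 1) * (x0 + x1 + x2).
Proof. nia. Qed.

Lemma coins_1_a_aS_ge_sub {x0 x1 x2 : nat} :
  x0 + a * x1 + (a + 1) * x2 = M -> M - a * (x1 + x2) <= x0 + x1 + x2.
Proof. nia. Qed.

Let q := M %/ (a + 1).
Let r := M %% (a + 1).

Lemma OB_eq_1_a_aS_trade : 0 < r -> a <= q + r -> OB_eq B M q.+1.
Proof.
move=> r_gt0 le_a_qr; have M_eq : M = q * (a + 1) + r := divn_eq M (a + 1).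
have r_le_a : r <= a by rewrite /r; lia.
apply: OB_eq_1_a_aS.
- by exists 0, (a + 1 - r), (q + r - a); split; nia.
- move=> x0 x1 x2 /coins_1_a_aS_ge_div; nia.
Qed.

Lemma OB_eq_1_a_aS_greedy : r = 0 \/ M < a * q.+1 -> OB_eq B M (q + r).
Proof.
move=> hr; have M_eq : M = q * (a + 1) + r := divn_eq M (a + 1).
apply: OB_eq_1_a_aS; first by exists r, 0, q; split; lia.
move=> x0 x1 x2 reprx; case: hr => [r0 | M_lt].
- by have := coins_1_a_aS_ge_div reprx; nia.
- have few_big : x1 + x2 <= q by nia.
  by have := coins_1_a_aS_ge_sub reprx; nia.
Qed.

End CoinsOneAASucc.

Theorem mainTheorem2 (a M : nat) (ha : 2 <= a) (hM : 0 < M) :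
  let B := [:: 1; a; a + 1] in
  let q := M %/ (a + 1) in
  if ~~ ((a + 1) %| M) && (a * (q + 1) <= M)
  then OB_eq B M (1 + q)
  else OB_eq B M (M - a * q).
Proof.
move=> B q; have M_eq : M = q * (a + 1) + M %% (a + 1) := divn_eq M (a + 1).
case: ifP => [/andP [ndvd le_M] | /negbT].
- by rewrite add1n; apply: OB_eq_1_a_aS_trade; rewrite -/q; lia.
- rewrite negb_and negbK -ltnNge => hr.
  have -> : M - a * q = q + M %% (a + 1) by nia.
  by apply: OB_eq_1_a_aS_greedy; case/orP: hr; [left | right]; lia.
Qed.
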